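(* Assemblage maps are in bijection with $r$-straightenings, $r$-cyclic assemblage maps are in bijection with $r$-cyclic straightenings, and $r$-cyclic assemblage maps with duality are in bijection with $r$-cyclic straightenings with duality.
   Context: Let $r$ be a positive integer and consider the standard simplex $\triangle^{r-1}$ with vertex set $\{0,1,\dots,r-1\}$. The barycentric subdivision $\operatorname{sd}\partial\triangle^{r-1}$ of its boundary is the simplicial complex with one vertex for each non-empty proper subset (face) of $\{0,\dots,r-1\}$ and one $k$-face for each ascending chain $\tau_0\subset\tau_1\subset\dots\subset\tau_k$ of such faces; this face is written $(\bar\tau_0|\bar\tau_1|\dots|\bar\tau_k)$ with $\bar\tau_i=\tau_i\smallsetminus\tau_{i-1}$. Let $s_*$ be the chain map from the normalized chains of $\partial\triangle^{r-1}$ to the normalized chains of $\operatorname{sd}\partial\triangle^{r-1}$ given on an ordered generator $[a_0,\dots,a_{k-1}]$ by $s_*([a_0,\dots,a_{k-1}])=\sum_{\pi\in\Sigma_k}(-1)^{\operatorname{sign}(\pi)}(a_{\pi(0)}|a_{\pi(1)}|\dots|a_{\pi(k-1)})$. An assemblage map is a simplicial map $g\colon\operatorname{sd}\partial\triangle^{r-1}\to\partial\triangle^{r-1}$ such that $g_*\circ s_*$ is the identity. The cyclic group $\mathbb{C}_r=\langle\rho\rangle$ acts on $\{0,\dots,r-1\}$ by $i\mapsto i+1 \bmod r$ (forward action), hence on $\partial\triangle^{r-1}$ and $\operatorname{sd}\partial\triangle^{r-1}$; an $r$-cyclic assemblage map is an assemblage map that is $\mathbb{C}_r$-equivariant. Let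 $\Lambda$ be the endomorphism of $\operatorname{sd}\partial\triangle^{r-1}$ sending an ascending chain $\tau_0\subset\dots\subset\tau_{k-1}$ to $(-1)^{\binom{k}{2}}\,\tau_{k-1}^c\subset\dots\subset\tau_0^c$ (complements in $\{0,\dots,r-1\}$). An $r$-cyclic assemblage map with duality is an $r$-cyclic assemblage map $g$ such that the composition $\rho^{-1}\circ g\circ\Lambda\colon\operatorname{sd}\partial\triangle^{r-1}\to\partial\triangle^{r-1}$ is also an assemblage map. An $r$-straightening is a choice, for each non-empty proper subset $\tau$ of $\{0,1,\dots,r-1\}$, of an element $x_\tau\in\tau$; it is $r$-cyclic if it is equivariant with respect to the action of $\mathbb{C}_r$, and it is an $r$-cyclic straightening with duality if moreover the cyclic predecessor of $x_\tau$ is not an element of $\tau$. *)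

From mathcomp Require Import all_boot all_order all_algebra all_fingroup.
Set Implicit Arguments. Unset Strict Implicit. Unset Printing Implicit Defensive.
Import GRing.Theory Num.Theory.
Local Open Scope ring_scope.

(* Vertex set {0,...,r-1} = 'I_r.  A vertex map sd∂Δ^{r-1} -> ∂Δ^{r-1} is a
   function g : {set 'I_r} -> 'I_r; only its values on faces (non-empty proper
   subsets) matter. *)

Section Defs.
Variable r : nat.

(* faces of ∂Δ^{r-1} = vertices of sd∂Δ^{r-1} *)
Definition is_face (t : {set 'I_r}) : bool := (t != set0) && (t != setT).

(* simplices of sd∂Δ^{r-1}: non-empty strictly ascending chains of faces *)
Definition is_sd_simplex (c : seq {set 'I_r}) : bool :=
  [&& c != [::], all is_face c & sorted (fun A B : {set 'I_r} => A \proper B) c].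

(* g is a simplicial map sd∂Δ -> ∂Δ: images of simplices are faces *)
Definition simplicial (g : {set 'I_r} -> 'I_r) : Prop :=
  forall c, is_sd_simplex c -> [set g t | t in c] != setT.

Definition ninv (s : seq 'I_r) : nat :=
  \sum_(i < size s) \sum_(j < size s | (i < j)%N)
     (nth 0%N (map val s) j < nth 0%N (map val s) i)%N.

(* Oriented (normalized) chains of ∂Δ^{r-1} with integer coefficients are
   functions {set 'I_r} -> int (coefficient of each face, oriented by the
   increasing order of its vertices).  [orient s] is the chain represented by
   the ordered simplex [s_0,...,s_k]: 0 if it has a repeated vertex, otherwise
   the sign of the sorting permutation times the face. *)
Definition orient (s : seq 'I_r) : {set 'I_r} -> int :=
  fun A => if uniq s && ([set x in s] == A) then (-1) ^+ ninv s else 0.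

(* the flag (a_{π0} | a_{π1} | ... | a_{π(k-1)}) of sd∂Δ, as the chain
   {a_{π0}} ⊂ {a_{π0},a_{π1}} ⊂ ... *)
Definition flag k (a : k.-tuple 'I_r) (p : 'S_k) : seq {set 'I_r} :=
  [seq [set tnth a (p i) | i : 'I_k & (i <= j)%N] | j : 'I_k <- enum 'I_k].

Definition sgn k (p : 'S_k) : int := (-1) ^+ odd_perm p.

(* F describes a chain map sd∂Δ -> ∂Δ by its values on generators (flags).
   [comp_s_id F] : F_* ∘ s_* is the identity, checked on every ordered
   generator [a_0,...,a_{k-1}] of the chains of ∂Δ (distinct vertices,
   spanning a face). *)
Definition comp_s_id (F : seq {set 'I_r} -> {set 'I_r} -> int) : Prop :=
  forall k (a : k.-tuple 'I_r), (0 < k)%N -> uniq a -> is_face [set x in a] ->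
    forall A : {set 'I_r},
      \sum_(p : 'S_k) sgn p * F (flag a p) A = orient a A.

Definition push (g : {set 'I_r} -> 'I_r) (c : seq {set 'I_r}) : {set 'I_r} -> int :=
  orient (map g c).

Definition assemblage (g : {set 'I_r} -> 'I_r) : Prop :=
  simplicial g /\ comp_s_id (push g).

Definition rho (i : 'I_r) : 'I_r := ordS i.
Definition rho_inv (i : 'I_r) : 'I_r := ord_pred i.
Definition rho_set (t : {set 'I_r}) : {set 'I_r} := [set rho x | x in t].

Definition equivariant (g : {set 'I_r} -> 'I_r) : Prop :=
  forall t, is_face t -> g (rho_set t) = rho (g t).

Definition cyclic_assemblage (g : {set 'I_r} -> 'I_r) : Prop :=
  assemblage g /\ equivariant g.

Definition Lambda_sign (c : seq {set 'I_r}) : int := (-1) ^+ 'C(size c, 2).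
Definition Lambda_flag (c : seq {set 'I_r}) : seq {set 'I_r} :=
  rev (map (fun t => ~: t) c).

(* the composite ρ^{-1} ∘ g ∘ Λ, on generators of sd∂Δ; its underlying
   vertex map is τ ↦ ρ^{-1}(g(τ^c)) *)
Definition dual_vertex_map (g : {set 'I_r} -> 'I_r) : {set 'I_r} -> 'I_r :=
  fun t => rho_inv (g (~: t)).
Definition dual_chain_map (g : {set 'I_r} -> 'I_r) (c : seq {set 'I_r})
  : {set 'I_r} -> int :=
  fun A => Lambda_sign c * orient (map (fun t => rho_inv (g t)) (Lambda_flag c)) A.

Definition cyclic_assemblage_dual (g : {set 'I_r} -> 'I_r) : Prop :=
  cyclic_assemblage g /\
  (simplicial (dual_vertex_map g) /\ comp_s_id (dual_chain_map g)).

Definition straightening (x : {set 'I_r} -> 'I_r) : Prop :=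
  forall t, is_face t -> x t \in t.

Definition cyclic_straightening (x : {set 'I_r} -> 'I_r) : Prop :=
  straightening x /\ equivariant x.

Definition cyclic_straightening_dual (x : {set 'I_r} -> 'I_r) : Prop :=
  cyclic_straightening x /\ (forall t, is_face t -> rho_inv (x t) \notin t).

End Defs.

(* A vertex map g sends the flag (a_{π0}|...|a_{π(k-1)}) to the sequence of its
   values on the prefix sets {a_{π0},...,a_{πj}}.  When g is a straightening, this
   sequence has distinct entries only if g of each prefix is the vertex just
   added, i.e. only if π lists the vertices of σ in the order in which g peels
   them off (g(σ) last, g(σ \ g(σ)) before it, ...).  So exactly one term of
   g_* s_* [a] survives, and it is [a] with the correct sign.  Conversely, a
   surviving term supported on σ ends with g(σ), so g(σ) ∈ σ. *)

From mathcomp Require Import all_boot all_order all_algebra all_fingroup.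
Set Implicit Arguments. Unset Strict Implicit. Unset Printing Implicit Defensive.
Import GRing.Theory Num.Theory.

Lemma sum_ltn_ord k : \sum_(i < k) \sum_(j < k) (i < j) = 'C(k, 2).
Proof.
rewrite exchange_big -bin2_sum big_mkord; apply: eq_bigr => j _.
rewrite -[in RHS](card_ord j) -sum1_card (big_ord_widen _ (fun _ => 1) (ltnW (ltn_ord j))).
by rewrite [RHS]big_mkcond; apply: eq_bigr => i _; case: (i < j).
Qed.

Section Inversions.
Variable k : nat.
Implicit Types (f : 'I_k -> nat) (p : 'S_k).

Definition inversions f : nat :=
  \sum_(i < k) \sum_(j < k | i < j) (f j < f i).

Lemma eq_inversions f1 f2 : f1 =1 f2 -> inversions f1 = inversions f2.
Proof. by move=> e; apply: eq_bigr => i _; apply: eq_bigr => j _; rewrite !e. Qed.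

Lemma inversions_rev f :
  injective f -> inversions (f \o @rev_ord k) + inversions f = 'C(k, 2).
Proof.
move=> f_inj; rewrite -sum_ltn_ord.
have -> : inversions (f \o @rev_ord k) = \sum_(i < k) \sum_(j < k | i < j) (f i < f j).
  rewrite /inversions (reindex_inj rev_ord_inj).
  under eq_bigr do rewrite (reindex_inj rev_ord_inj) big_mkcond.
  rewrite exchange_big; apply: eq_bigr => i _; rewrite [RHS]big_mkcond.
  apply: eq_bigr => j _ /=.
  by rewrite !rev_ordK ltn_sub2lE ?ltn_ord // ltnS.
rewrite /inversions -big_split; apply: eq_bigr => i _.
rewrite -big_split big_mkcond; apply: eq_bigr => j _ /=.
case: ltnP => //= lt_ij.
have : f i != f j by apply: contraTneq lt_ij => /f_inj ->; rewrite ltnn.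
by case: ltngtP.
Qed.

Local Open Scope ring_scope.

(* The parity of [inversions f] is read off the sign of the Vandermonde
   determinant of f, on which a permutation of the columns acts by its signature. *)
Definition vandermonde_prod f : int :=
  \prod_(i < k) \prod_(j < k | (i < j)%N) ((f j)%:Z - (f i)%:Z).

Lemma vandermonde_prod_perm f p :
  vandermonde_prod (f \o p) = (-1) ^+ p * vandermonde_prod f.
Proof.
have detE h : vandermonde_prod h = \det (Vandermonde k (\row_j (h j)%:Z)).
  by rewrite det_Vandermonde; apply: eq_bigr => i _; apply: eq_bigr => j _; rewrite !mxE.
rewrite !detE; have -> : Vandermonde k (\row_j (f (p j))%:Z) =
                   col_perm p (Vandermonde k (\row_j (f j)%:Z)).
  by apply/matrixP => i j; rewrite !mxE.
by rewrite col_permE det_mulmx det_perm odd_permV mulrC.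
Qed.

Lemma sgr_vandermonde_prod f :
  injective f -> Num.sg (vandermonde_prod f) = (-1) ^+ inversions f.
Proof.
move=> f_inj; rewrite expr_sum (big_morph _ (@sgrM int) (@sgr1 int)); apply: eq_bigr => i _.
rewrite expr_sum (big_morph _ (@sgrM int) (@sgr1 int)); apply: eq_bigr => j lt_ij.
have : f j != f i by apply: contraTneq lt_ij => /f_inj ->; rewrite ltnn.
case: ltngtP => // [lt_ji | lt_ij'] _.
  by rewrite ltr0_sg // subr_lt0 ltz_nat.
by rewrite gtr0_sg // subr_gt0 ltz_nat.
Qed.

Lemma sign_inversions_perm f p : injective f ->
  (-1) ^+ inversions (f \o p) = (-1) ^+ p * (-1) ^+ inversions f :> int.
Proof.
move=> f_inj; have fp_inj : injective (f \o p) := inj_comp f_inj perm_inj.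
by rewrite -!sgr_vandermonde_prod // vandermonde_prod_perm sgrM sgrX sgrN1.
Qed.

End Inversions.

Section Orientation.
Variable r : nat.
Local Open Scope ring_scope.
Implicit Types (s : seq 'I_r) (A : {set 'I_r}).

Definition permute_tuple k (a : k.-tuple 'I_r) (p : 'S_k) : k.-tuple 'I_r :=
  [tuple tnth a (p i) | i < k].

Lemma perm_eq_permute_tuple k (a : k.-tuple 'I_r) p : perm_eq (permute_tuple a p) a.
Proof. by apply/tuple_permP; exists p. Qed.

Lemma permute_tuple_inj k (a : k.-tuple 'I_r) : uniq a -> injective (permute_tuple a).
Proof.
move=> a_uniq p q e; apply/permP => i; apply/(tuple_uniqP a a_uniq).
by have := congr1 (fun t => tnth t i) e; rewrite !tnth_mktuple.
Qed.

Lemma ninv_tuple k (t : k.-tuple 'I_r) : ninv t = inversions (fun i => val (tnth t i)).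
Proof.
have nthE (i : 'I_k) : nth 0%N (map val t) i = val (tnth t i).
  by rewrite (nth_map (tnth t i)) ?size_tuple // -tnth_nth.
by rewrite /ninv size_tuple; apply: eq_bigr => i _; apply: eq_bigr => j _; rewrite !nthE.
Qed.

Lemma orient_neq0 s A : (orient s A != 0) = uniq s && ([set x in s] == A).
Proof. by rewrite /orient; case: ifP; rewrite ?signr_eq0 ?eqxx. Qed.

Lemma orient_permute_tuple k (a : k.-tuple 'I_r) p A : uniq a ->
  orient (permute_tuple a p) A = sgn p * orient a A.
Proof.
move=> a_uniq; have pe := perm_eq_permute_tuple a p.
rewrite /orient (perm_uniq pe) a_uniq (eq_finset _ (perm_mem pe)).
case: eqP => _; last by rewrite mulr0.
rewrite !ninv_tuple (@eq_inversions _ _ ((fun i => val (tnth a i)) \o p)) => [|i].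
  by apply: sign_inversions_perm => i j /val_inj; apply/tuple_uniqP.
by rewrite /= tnth_mktuple.
Qed.

Lemma orient_rev s A : (-1) ^+ 'C(size s, 2) * orient (rev s) A = orient s A.
Proof.
rewrite /orient rev_uniq (eq_finset _ (mem_rev s)).
case: ifP => [/andP [s_uniq _]|_]; last by rewrite mulr0.
pose t := in_tuple s; pose f i := val (tnth t i).
have f_inj : injective f by move=> i j /val_inj; apply/tuple_uniqP.
have -> : ninv (rev s) = inversions (f \o @rev_ord _).
  rewrite (ninv_tuple (rev_tuple t)); apply: eq_inversions => i /=.
  by rewrite /f (tnth_nth (tnth t i) (rev_tuple t) i) (tnth_nth (tnth t i) t (rev_ord i)) nth_rev.
by rewrite (ninv_tuple t) -(inversions_rev f_inj) exprD mulrAC -mulrA signrMK.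
Qed.

End Orientation.

Section Peeling.
Variables (r : nat) (g : {set 'I_r} -> 'I_r).
Implicit Types (s : seq 'I_r) (S : {set 'I_r}).

Definition prefix_images s : seq 'I_r :=
  [seq g [set x in take j.+1 s] | j <- iota 0 (size s)].

Definition straightening_on S : Prop :=
  forall T : {set 'I_r}, T \subset S -> T != set0 -> g T \in T.

Lemma straightening_onS S1 S2 :
  S1 \subset S2 -> straightening_on S2 -> straightening_on S1.
Proof. by move=> sub12 g2 T subT; apply/g2/(subset_trans subT). Qed.

Lemma prefix_images_rcons s x :
  prefix_images (rcons s x) = rcons (prefix_images s) (g [set y in rcons s x]).
Proof.
rewrite /prefix_images size_rcons -addn1 iotaD map_cat cats1 add0n.
congr rcons; last by rewrite take_oversize // size_rcons.
apply/eq_in_map => j; rewrite mem_iota => /andP [_ lt_js].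
by rewrite -cats1 takel_cat.
Qed.

Lemma set_rcons_uniq s x : uniq (rcons s x) -> [set y in s] = [set y in rcons s x] :\ x.
Proof.
rewrite rcons_uniq => /andP [x_notin_s _]; apply/setP => y.
by rewrite !inE mem_rcons in_cons; case: eqP => [->|] //=; rewrite (negbTE x_notin_s).
Qed.

Lemma prefix_images_fixed s : uniq s -> straightening_on [set x in s] ->
  uniq (prefix_images s) -> prefix_images s = s.
Proof.
elim/last_ind: s => [//|s x IH] sx_uniq g_sx.
rewrite prefix_images_rcons rcons_uniq => /andP [g_notin_pre pre_uniq].
have pre_s : prefix_images s = s.
  move: sx_uniq; rewrite rcons_uniq => /andP [_ s_uniq].
  apply: IH => //; apply: straightening_onS g_sx.
  by apply/subsetP => y; rewrite !inE mem_rcons in_cons orbC => ->.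
have : g [set y in rcons s x] \in [set y in rcons s x].
  by apply: g_sx => //; apply/set0Pn; exists x; rewrite inE mem_rcons mem_head.
move: g_notin_pre; rewrite pre_s inE mem_rcons in_cons => /negbTE ->.
by rewrite orbF => /eqP ->.
Qed.

Lemma prefix_images_fixed_inj s1 s2 : uniq s1 -> uniq s2 ->
  prefix_images s1 = s1 -> prefix_images s2 = s2 ->
  [set x in s1] = [set x in s2] -> s1 = s2.
Proof.
elim/last_ind: s1 s2 => [|s1 x1 IH] s2.
  case/lastP: s2 => [//|s2 x2] _ _ _ _ /setP /(_ x2).
  by rewrite !inE mem_rcons mem_head.
case/lastP: s2 => [|s2 x2].
  by move=> _ _ _ _ /setP /(_ x1); rewrite !inE mem_rcons mem_head.
move=> u1 u2 fix1 fix2 eq12.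
move: (fix1) (fix2); rewrite !prefix_images_rcons.
move=> /rcons_inj [pre1 g1] /rcons_inj [pre2 g2].
have eq_x : x1 = x2 by rewrite -g1 -g2 eq12.
rewrite -eq_x in u2 eq12 *; congr rcons; apply: IH => //.
- by move: u1; rewrite rcons_uniq => /andP [].
- by move: u2; rewrite rcons_uniq => /andP [].
- by rewrite (set_rcons_uniq u1) (set_rcons_uniq u2) eq12.
Qed.

Lemma exists_prefix_images_fixed S : straightening_on S ->
  exists s, [/\ uniq s, [set x in s] = S & prefix_images s = s].
Proof.
have [n] := ubnP #|S|; elim: n S => // n IH S; rewrite ltnS => card_S g_S.
have [->|S_neq0] := eqVneq S set0.
  by exists [::]; split => //; apply/setP => y; rewrite !inE.
have gS_in : g S \in S by exact: g_S.
have card_S' : #|S :\ g S| < n by rewrite (cardsD1 (g S)) gS_in in card_S.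
have g_S' := straightening_onS (subD1set S (g S)) g_S.
have [s [s_uniq set_s pre_s]] := IH _ card_S' g_S'.
have mem_s y : (y \in s) = (y \in S :\ g S) by rewrite -set_s inE.
have set_sx : [set y in rcons s (g S)] = S.
  by apply/setP => y; rewrite inE mem_rcons in_cons mem_s !inE; case: eqP => [->|].
exists (rcons s (g S)); split => //.
- by rewrite rcons_uniq s_uniq mem_s setD11.
- by rewrite prefix_images_rcons pre_s set_sx.
Qed.

End Peeling.

Lemma set_tnth_prefix r k (t : k.-tuple 'I_r) (j : 'I_k) :
  [set tnth t i | i : 'I_k & i <= j] = [set x in take j.+1 t].
Proof.
apply/setP => x; rewrite inE; apply/imsetP/idP.
  move=> [i]; rewrite inE => le_ij ->.
  rewrite (tnth_nth (tnth t i)) -(nth_take (tnth t i) (n0 := j.+1)) //.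
  by apply: mem_nth; rewrite size_take_min ltn_min ltnS le_ij size_tuple ltn_ord.
move=> /(nthP (tnth t j)) [i]; rewrite size_take_min ltn_min ltnS size_tuple.
case/andP=> le_ij lt_ik <-; exists (Ordinal lt_ik); first by rewrite inE.
by rewrite nth_take // [RHS](tnth_nth (tnth t j)).
Qed.

Lemma map_flag r (g : {set 'I_r} -> 'I_r) k (a : k.-tuple 'I_r) (p : 'S_k) :
  map g (flag a p) = prefix_images g (permute_tuple a p).
Proof.
rewrite /flag /prefix_images size_tuple -val_enum_ord -!map_comp.
apply/eq_map => j /=; rewrite -[in RHS](set_tnth_prefix (permute_tuple a p) j).
by congr g; apply: eq_imset => i; rewrite tnth_mktuple.
Qed.

Lemma sorted_proper_top (T : finType) (c : seq {set T}) : c != [::] ->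
  sorted (fun A B : {set T} => A \proper B) c ->
  exists2 L, L \in c & forall A, A \in c -> A \subset L.
Proof.
elim: c => [//|A0 [|A1 c] IH] _ /=.
  by exists A0; rewrite ?mem_head // => A; rewrite inE => /eqP ->.
case/andP=> A01 sorted_c; have [L L_in L_top] := IH isT sorted_c.
exists L; first by rewrite in_cons L_in orbT.
move=> A; rewrite in_cons => /predU1P [->|]; last exact: L_top.
exact: subset_trans (proper_sub A01) (L_top _ (mem_head _ _)).
Qed.

Lemma is_faceC r (t : {set 'I_r}) : is_face (~: t) = is_face t.
Proof.
have eqC (A B : {set 'I_r}) : (~: A == B) = (A == ~: B).
  by rewrite -(inj_eq (@setC_inj _)) setCK.
by rewrite /is_face !eqC setC0 setCT andbC.
Qed.

Section Assemblage.
Variables (r : nat) (g : {set 'I_r} -> 'I_r).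
Local Open Scope ring_scope.

Lemma straightening_on_face S :
  straightening g -> is_face S -> straightening_on g S.
Proof.
move=> g_straight /andP [_ S_neqT] T sub_TS T_neq0; apply: g_straight.
rewrite /is_face T_neq0; apply: contraNneq S_neqT => T_eqT.
by rewrite eqEsubset subsetT -T_eqT.
Qed.

Lemma straightening_simplicial : straightening g -> simplicial g.
Proof.
move=> g_straight c /and3P [c_neq0 c_faces c_sorted].
have [L L_in L_top] := sorted_proper_top c_neq0 c_sorted.
have /andP [_ L_neqT] : is_face L by exact: (allP c_faces).
apply: contraNneq L_neqT => img_eqT; rewrite eqEsubset subsetT /=.
apply/subsetP => v; rewrite -img_eqT => /imsetP [A A_in ->].
apply/(subsetP (L_top _ A_in))/g_straight; exact: (allP c_faces).
Qed.

Lemma straightening_comp_s_id : straightening g -> comp_s_id (push g).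
Proof.
move=> g_straight k a _ a_uniq a_face A.
have g_a := straightening_on_face g_straight a_face.
have [s0 [s0_uniq set_s0 fixed_s0]] := exists_prefix_images_fixed g_a.
have /tuple_permP [p0 def_s0] : perm_eq s0 a.
  by apply: uniq_perm => // x; move/setP/(_ x): set_s0; rewrite !inE.
rewrite {}def_s0 in s0_uniq set_s0 fixed_s0.
rewrite (bigD1 p0) //= big1 ?addr0.
  by rewrite /push map_flag fixed_s0 orient_permute_tuple // /sgn signrMK.
move=> p p_neq_p0; rewrite /push map_flag.
have [->|] := eqVneq (orient (prefix_images g (permute_tuple a p)) A) 0.
  by rewrite mulr0.
rewrite orient_neq0 => /andP [pre_uniq _].
have pe := perm_eq_permute_tuple a p.
have set_p : [set x in permute_tuple a p] = [set x in a] := eq_finset _ (perm_mem pe).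
have fixed_p : prefix_images g (permute_tuple a p) = permute_tuple a p.
  by apply: prefix_images_fixed; rewrite ?(perm_uniq pe) ?set_p.
case/eqP: p_neq_p0; apply: (permute_tuple_inj a_uniq); apply: val_inj.
by apply: (@prefix_images_fixed_inj _ g); rewrite ?(perm_uniq pe) ?set_p.
Qed.

Lemma comp_s_id_straightening : comp_s_id (push g) -> straightening g.
Proof.
move=> g_id t t_face; have t_gt0 : (0 < #|t|)%N by rewrite card_gt0; case/andP: t_face.
pose a := enum_tuple t; have a_uniq : uniq a := enum_uniq _.
have set_a : [set x in a] = t by apply/setP => x; rewrite inE mem_enum.
have := g_id _ a t_gt0 a_uniq; rewrite set_a => /(_ t_face t) sum_eq.
have [p term_p] : exists p : 'S_#|t|, sgn p * push g (flag a p) t != 0.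
  apply/existsP; apply: contraTT isT => /existsPn all0.
  have : orient a t != 0 by rewrite orient_neq0 a_uniq set_a eqxx.
  by rewrite -sum_eq big1 ?eqxx // => p _; apply/eqP/negPn/all0.
move: term_p; rewrite mulf_eq0 negb_or => /andP [_].
rewrite /push map_flag orient_neq0 => /andP [_ /eqP set_pre].
set s := permute_tuple a p.
have set_s : [set x in s] = t :=
  etrans (eq_finset _ (perm_mem (perm_eq_permute_tuple a p))) set_a.
rewrite -{2}set_pre inE; apply/mapP; exists #|t|.-1.
  by rewrite size_tuple mem_iota add0n prednK ?leqnn.
by rewrite prednK // take_oversize ?size_tuple // set_s.
Qed.

Lemma assemblageP : assemblage g <-> straightening g.
Proof.
split=> [[_ /comp_s_id_straightening] //|g_straight].
by split; [exact: straightening_simplicial | exact: straightening_comp_s_id].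
Qed.

End Assemblage.

Lemma eq_comp_s_id r (F G : seq {set 'I_r} -> {set 'I_r} -> int) :
  (forall c, F c =1 G c) -> comp_s_id F <-> comp_s_id G.
Proof.
move=> eqFG; split=> id_F k a k_gt0 a_uniq a_face A; rewrite -(id_F k a) //;
  by apply: eq_bigr => p _; rewrite eqFG.
Qed.

Section Duality.
Variables (r : nat) (g : {set 'I_r} -> 'I_r).

Lemma dual_chain_mapE c : dual_chain_map g c =1 push (dual_vertex_map g) c.
Proof.
move=> A; rewrite /dual_chain_map /push /Lambda_sign /Lambda_flag map_rev -map_comp.
by rewrite -(orient_rev (map (dual_vertex_map g) c)) size_map.
Qed.

Lemma dual_assemblageP :
  simplicial (dual_vertex_map g) /\ comp_s_id (dual_chain_map g) <->
  assemblage (dual_vertex_map g).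
Proof.
have [to_push of_push] := eq_comp_s_id dual_chain_mapE.
by split=> -[g_simpl g_id]; split; [|exact: to_push| |exact: of_push].
Qed.

Lemma straightening_dual_vertex_map :
  straightening (dual_vertex_map g) <->
  forall t, is_face t -> rho_inv (g t) \notin t.
Proof.
split=> g_dual t t_face.
  by have := g_dual (~: t); rewrite is_faceC /dual_vertex_map setCK inE => /(_ t_face).
by have := g_dual (~: t); rewrite is_faceC in_setC negbK /dual_vertex_map; apply.
Qed.

End Duality.

Theorem lemma6p8 (r : nat) (hr : (0 < r)%N) (g : {set 'I_r} -> 'I_r) :
  (assemblage g <-> straightening g) /\
  (cyclic_assemblage g <-> cyclic_straightening g) /\
  (cyclic_assemblage_dual g <-> cyclic_straightening_dual g).
Proof.
have cyclicP : cyclic_assemblage g <-> cyclic_straightening g.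
  by split=> -[g_assemb g_equiv]; split=> //; apply/assemblageP.
split; first exact: assemblageP.
split=> //; split=> -[g_cyclic g_dual]; split; try exact/cyclicP.
  exact/straightening_dual_vertex_map/assemblageP/dual_assemblageP.
exact/dual_assemblageP/assemblageP/straightening_dual_vertex_map.
Qed.
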